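(* Let $f\in C^4(\mathbb I)$ on an open interval $\mathbb I$ with $f''>0$ and $f''''>0$ on $\mathbb I$. Let $\rho^{n-1},\rho^n,\phi^n\in\mathcal C$ and let $(\rho^{n+1},\phi^{n+1})\in\mathcal C^2$ solve the scheme, with $\rho^n,\rho^{n+1}$ and $\hat\rho^{n+\frac12}$ taking values in $\mathbb I$. Set $F^k_h:=F_h(\rho^k,\phi^k)$ and $v^{n+\frac12}=\gamma S^{n+\frac12}-\frac\chi2(\phi^{n+1}+\phi^n)+\frac{\chi^2\Delta t}{4\theta}(\rho^{n+1}-\rho^n)$. Then $$F_h^{n+1}-F_h^n\le-\Delta t\Big[\frac{1}{f''(\hat\rho^{n+\frac12})}\nabla_hv^{n+\frac12},\nabla_hv^{n+\frac12}\Big]-\frac{\theta}{\Delta t}\|\phi^{n+1}-\phi^n\|_2^2-\frac{\chi^2\Delta t}{4\theta}\|\rho^{n+1}-\rho^n\|_2^2\le 0 .$$ (This applies in particular to $f(\rho)=\rho(\ln\rho-1)$ and $f(\rho)=\rho(\ln\rho-1)+\kappa\rho^2/2$ on $(0,\infty)$, and to $f(\rho)=\rho\ln\rho+(M-\rho)\ln(1-\rho/M)$ on $(0,M)$.)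
   Context: Grid setting: $\Omega=(a,b)^3$, $N\in\mathbb N$, $h=(b-a)/N$, cell centers $(x_i,y_j,z_k)=(a+(i-\tfrac12)h,a+(j-\tfrac12)h,a+(k-\tfrac12)h)$, $1\le i,j,k\le N$. $\mathcal C$ is the space of cell-centered grid functions $u_{i,j,k}$, extended to ghost points by the discrete homogeneous Neumann condition $u_{0,j,k}=u_{1,j,k}$, $u_{N+1,j,k}=u_{N,j,k}$ (and likewise in $j$ and $k$). Operators: $D_xf_{i+1/2,j,k}=(f_{i+1,j,k}-f_{i,j,k})/h$, $A_xf_{i+1/2,j,k}=(f_{i+1,j,k}+f_{i,j,k})/2$; for face-centered $g$, $d_xg_{i,j,k}=(g_{i+1/2,j,k}-g_{i-1/2,j,k})/h$, $a_xg_{i,j,k}=(g_{i+1/2,j,k}+g_{i-1/2,j,k})/2$; analogously in $y,z$. $\nabla_hf=(D_xf,D_yf,D_zf)$, $\Delta_hf=d_xD_xf+d_yD_yf+d_zD_zf$, and for cell-centered $\mathcal D$, $\nabla_h\cdot(\mathcal D\nabla_hf):=d_x(A_x\mathcal D\,D_xf)+d_y(A_y\mathcal D\,D_yf)+d_z(A_z\mathcal D\,D_zf)$. Inner products: $\langle f,g\rangle=h^3\sum_{i,j,k=1}^Nf_{i,j,k}g_{i,j,k}$, $\|f\|_2^2=\langle f,f\rangle$; for face-centered vector fields $[\vec f,\vec g]=\langle a_x(f^xg^x),1\rangle+\langle a_y(f^yg^y),1\rangle+\langle a_z(f^zg^z),1\rangle$, $\|\nabla_hf\|_2^2=[\nabla_hf,\nabla_hf]$,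 and for cell-centered $\mathcal D$, $[\mathcal D\nabla_hf,\nabla_hg]:=[(A_x\mathcal D\,D_xf,A_y\mathcal D\,D_yf,A_z\mathcal D\,D_zf),\nabla_hg]$. Scheme: parameters $\gamma,\mu,\alpha,\chi,\theta>0$, $\Delta t>0$. With $\hat\rho^{n+\frac12}=\big((\tfrac32\rho^n-\tfrac12\rho^{n-1})^2+\Delta t^8\big)^{1/2}$ pointwise, $(\rho^{n+1},\phi^{n+1})$ satisfies $$\frac{\rho^{n+1}-\rho^n}{\Delta t}=\nabla_h\cdot\Big[\frac{1}{f''(\hat\rho^{n+\frac12})}\nabla_hv^{n+\frac12}\Big],\qquad \theta\frac{\phi^{n+1}-\phi^n}{\Delta t}=\frac\mu2\Delta_h(\phi^{n+1}+\phi^n)-\frac\alpha2(\phi^{n+1}+\phi^n)+\frac\chi2(\rho^{n+1}+\rho^n),$$ with $v^{n+\frac12}$ as in the claim and $S^{n+\frac12}=f'(\rho^{n+1})-\tfrac12f''(\rho^{n+1})(\rho^{n+1}-\rho^n)+\tfrac16f'''(\rho^{n+1})(\rho^{n+1}-\rho^n)^2$ pointwise. Discrete energy: $F_h(\rho,\phi)=\gamma\langle f(\rho),1\rangle-\chi\langle\rho,\phi\rangle+\frac\mu2\|\nabla_h\phi\|_2^2+\frac\alpha2\|\phi\|_2^2$. *)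

From Stdlib Require Import Reals Lra Lia.
From Coquelicot Require Import Rbar.
Open Scope R_scope.

(* Cell-centered grid functions, indexed by (i,j,k); only 1 <= i,j,k <= N matter. *)
Definition grid := nat -> nat -> nat -> R.

(* clamp index into {1..N}: realizes the homogeneous Neumann ghost extension
   u_0 = u_1, u_{N+1} = u_N (and is the identity on 1..N). *)
Definition clamp (N i : nat) : nat := Nat.max 1 (Nat.min i N).
Definition ext (N : nat) (u : grid) : grid :=
  fun i j k => u (clamp N i) (clamp N j) (clamp N k).

(* Face-centered functions: in direction x, index i stands for the face i+1/2
   (i = 0..N); similarly for y, z. *)
Definition Dx (N : nat) (h : R) (u : grid) : grid :=
  fun i j k => (ext N u (S i) j k - ext N u i j k) / h.
Definition Dy (N : nat) (h : R) (u : grid) : grid :=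
  fun i j k => (ext N u i (S j) k - ext N u i j k) / h.
Definition Dz (N : nat) (h : R) (u : grid) : grid :=
  fun i j k => (ext N u i j (S k) - ext N u i j k) / h.
Definition Ax (N : nat) (u : grid) : grid :=
  fun i j k => (ext N u (S i) j k + ext N u i j k) / 2.
Definition Ay (N : nat) (u : grid) : grid :=
  fun i j k => (ext N u i (S j) k + ext N u i j k) / 2.
Definition Az (N : nat) (u : grid) : grid :=
  fun i j k => (ext N u i j (S k) + ext N u i j k) / 2.

(* face -> cell operators (cell i has faces i-1/2 = index i-1 and i+1/2 = index i) *)
Definition dx (h : R) (g : grid) : grid :=
  fun i j k => (g i j k - g (i - 1)%nat j k) / h.
Definition dy (h : R) (g : grid) : grid :=
  fun i j k => (g i j k - g i (j - 1)%nat k) / h.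
Definition dz (h : R) (g : grid) : grid :=
  fun i j k => (g i j k - g i j (k - 1)%nat) / h.
Definition ax (g : grid) : grid :=
  fun i j k => (g i j k + g (i - 1)%nat j k) / 2.
Definition ay (g : grid) : grid :=
  fun i j k => (g i j k + g i (j - 1)%nat k) / 2.
Definition az (g : grid) : grid :=
  fun i j k => (g i j k + g i j (k - 1)%nat) / 2.

Definition Lap (N : nat) (h : R) (u : grid) : grid :=
  fun i j k => dx h (Dx N h u) i j k + dy h (Dy N h u) i j k + dz h (Dz N h u) i j k.

Definition divDgrad (N : nat) (h : R) (D u : grid) : grid :=
  fun i j k =>
    dx h (fun a b c => Ax N D a b c * Dx N h u a b c) i j k
  + dy h (fun a b c => Ay N D a b c * Dy N h u a b c) i j k
  + dz h (fun a b c => Az N D a b c * Dz N h u a b c) i j k.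

Fixpoint sumR (n : nat) (F : nat -> R) : R :=
  match n with O => 0 | S m => sumR m F + F m end.

Definition sum3 (N : nat) (F : grid) : R :=
  sumR N (fun i => sumR N (fun j => sumR N (fun k => F (S i) (S j) (S k)))).

Definition ip (N : nat) (h : R) (f g : grid) : R :=
  h ^ 3 * sum3 N (fun i j k => f i j k * g i j k).
Definition one : grid := fun _ _ _ => 1.
Definition norm2sq (N : nat) (h : R) (f : grid) : R := ip N h f f.

Definition face_ip (N : nat) (h : R) (fx fy fz gx gy gz : grid) : R :=
  ip N h (ax (fun i j k => fx i j k * gx i j k)) one
+ ip N h (ay (fun i j k => fy i j k * gy i j k)) one
+ ip N h (az (fun i j k => fz i j k * gz i j k)) one.

Definition gradnorm2 (N : nat) (h : R) (f : grid) : R :=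
  face_ip N h (Dx N h f) (Dy N h f) (Dz N h f) (Dx N h f) (Dy N h f) (Dz N h f).

Definition wgrad_ip (N : nat) (h : R) (D f g : grid) : R :=
  face_ip N h
    (fun i j k => Ax N D i j k * Dx N h f i j k)
    (fun i j k => Ay N D i j k * Dy N h f i j k)
    (fun i j k => Az N D i j k * Dz N h f i j k)
    (Dx N h g) (Dy N h g) (Dz N h g).

Definition Fh (N : nat) (h gamma chi mu alpha : R) (f : R -> R) (rho phi : grid) : R :=
  gamma * ip N h (fun i j k => f (rho i j k)) one - chi * ip N h rho phi
  + mu / 2 * gradnorm2 N h phi + alpha / 2 * norm2sq N h phi.

Definition rhohat (dt : R) (rho_nm1 rho_n : grid) : grid :=
  fun i j k => sqrt ((3 / 2 * rho_n i j k - 1 / 2 * rho_nm1 i j k) ^ 2 + dt ^ 8).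

(* S^{n+1/2} with f1 = f', f2 = f'', f3 = f''' *)
Definition Shalf (f1 f2 f3 : R -> R) (rho_n rho_np1 : grid) : grid :=
  fun i j k =>
    let r1 := rho_np1 i j k in let d := r1 - rho_n i j k in
    f1 r1 - 1 / 2 * f2 r1 * d + 1 / 6 * f3 r1 * d ^ 2.

Definition vhalf (gamma chi theta dt : R) (f1 f2 f3 : R -> R)
  (rho_n rho_np1 phi_n phi_np1 : grid) : grid :=
  fun i j k =>
    gamma * Shalf f1 f2 f3 rho_n rho_np1 i j k
    - chi / 2 * (phi_np1 i j k + phi_n i j k)
    + chi ^ 2 * dt / (4 * theta) * (rho_np1 i j k - rho_n i j k).

Definition inI (lo hi : Rbar) (x : R) : Prop := Rbar_lt lo x /\ Rbar_lt x hi.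

Definition in_cells (N i j k : nat) : Prop :=
  (1 <= i <= N)%nat /\ (1 <= j <= N)%nat /\ (1 <= k <= N)%nat.

From Coquelicot Require Import Coquelicot.
From Stdlib Require Import Reals Lra Lia.
From Coquelicot Require Import Rbar.
Open Scope R_scope.

(* Testing the phi-equation with phi^{n+1} - phi^n and summing by parts expresses the
   mu- and alpha-parts of F_h^{n+1} - F_h^n through -theta/dt ||phi^{n+1} - phi^n||^2 and
   a coupling term; testing the rho-equation with v^{n+1/2} and summing by parts gives
   -dt [D grad v, grad v] with D = 1/f''(hat rho) > 0. The coupling terms cancel against
   the increment of -chi <rho, phi> once it is split symmetrically, and the last term of v
   produces -chi^2 dt/(4 theta) ||rho^{n+1} - rho^n||^2. The f-part is bounded cell by
   cell by f(r1) - f(r0) <= S (r1 - r0), the third-order Taylor expansion of f at r1,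
   whose remainder has a sign because f'''' > 0. *)

Lemma sumR_ext n F G : (forall i, (i < n)%nat -> F i = G i) -> sumR n F = sumR n G.
Proof.
induction n as [|n IH]; intros H; simpl; [reflexivity|].
rewrite IH by (intros; apply H; lia).
rewrite H by lia; reflexivity.
Qed.

Lemma sumR_add n F G : sumR n (fun i => F i + G i) = sumR n F + sumR n G.
Proof. induction n as [|n IH]; simpl; [ring | rewrite IH; ring]. Qed.

Lemma sumR_sub n F G : sumR n (fun i => F i - G i) = sumR n F - sumR n G.
Proof. induction n as [|n IH]; simpl; [ring | rewrite IH; ring]. Qed.

Lemma sumR_scal n c F : sumR n (fun i => c * F i) = c * sumR n F.
Proof. induction n as [|n IH]; simpl; [ring | rewrite IH; ring]. Qed.

Lemma sumR_telescope n H : sumR n (fun i => H (S i) - H i) = H n - H 0%nat.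
Proof. induction n as [|n IH]; simpl; [ring | rewrite IH; ring]. Qed.

Lemma sumR_zero n F : (forall i, (i < n)%nat -> F i = 0) -> sumR n F = 0.
Proof.
induction n as [|n IH]; intros H; simpl; [reflexivity|].
rewrite IH by (intros; apply H; lia).
rewrite H by lia; ring.
Qed.

Lemma sumR_le n F G : (forall i, (i < n)%nat -> F i <= G i) -> sumR n F <= sumR n G.
Proof.
induction n as [|n IH]; intros H; simpl; [lra|].
apply Rplus_le_compat; [apply IH; intros; apply H|apply H]; lia.
Qed.

Lemma sum3_ext N F G : (forall i j k, in_cells N i j k -> F i j k = G i j k) ->
  sum3 N F = sum3 N G.
Proof.
intros H; unfold sum3.
apply sumR_ext; intros; apply sumR_ext; intros; apply sumR_ext; intros.
apply H; unfold in_cells; lia.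
Qed.

Lemma sum3_le N F G : (forall i j k, in_cells N i j k -> F i j k <= G i j k) ->
  sum3 N F <= sum3 N G.
Proof.
intros H; unfold sum3.
apply sumR_le; intros; apply sumR_le; intros; apply sumR_le; intros.
apply H; unfold in_cells; lia.
Qed.

Lemma sum3_add N F G : sum3 N (fun i j k => F i j k + G i j k) = sum3 N F + sum3 N G.
Proof.
unfold sum3; rewrite <- sumR_add; apply sumR_ext; intros.
rewrite <- sumR_add; apply sumR_ext; intros; apply sumR_add.
Qed.

Lemma sum3_sub N F G : sum3 N (fun i j k => F i j k - G i j k) = sum3 N F - sum3 N G.
Proof.
unfold sum3; rewrite <- sumR_sub; apply sumR_ext; intros.
rewrite <- sumR_sub; apply sumR_ext; intros; apply sumR_sub.
Qed.

Lemma sum3_scal N c F : sum3 N (fun i j k => c * F i j k) = c * sum3 N F.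
Proof.
unfold sum3; rewrite <- sumR_scal; apply sumR_ext; intros.
rewrite <- sumR_scal; apply sumR_ext; intros; apply sumR_scal.
Qed.

Lemma sum3_opp N F : sum3 N (fun i j k => - F i j k) = - sum3 N F.
Proof.
rewrite (sum3_ext N _ (fun i j k => -1 * F i j k)) by (intros; ring).
rewrite sum3_scal; ring.
Qed.

Lemma sum3_const0 N : sum3 N (fun _ _ _ => 0) = 0.
Proof.
rewrite (sum3_ext N _ (fun _ _ _ => 0 * 0)) by (intros; ring).
rewrite sum3_scal; ring.
Qed.

Lemma sum3_nonneg N F : (forall i j k, in_cells N i j k -> 0 <= F i j k) -> 0 <= sum3 N F.
Proof. intros H; rewrite <- (sum3_const0 N); apply sum3_le; exact H. Qed.

Ltac sum3_combine :=
  repeat (rewrite <- sum3_scal || rewrite <- sum3_opp || rewrite <- sum3_add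
          || rewrite <- sum3_sub);
  apply sum3_ext.

Lemma sum3_telescope_x N H : (forall j k, H 0%nat j k = 0) -> (forall j k, H N j k = 0) ->
  sum3 N (fun i j k => H i j k - H (i - 1)%nat j k) = 0.
Proof.
intros H0 HN; unfold sum3.
set (K a := sumR N (fun j => sumR N (fun k => H a (S j) (S k)))).
transitivity (sumR N (fun i => K (S i) - K i)).
- apply sumR_ext; intros i _; unfold K; rewrite <- sumR_sub; apply sumR_ext; intros.
  rewrite <- sumR_sub; apply sumR_ext; intros; replace (S i - 1)%nat with i by lia; reflexivity.
- rewrite sumR_telescope; unfold K.
  rewrite !(sumR_zero N (fun j => sumR N _)); [ring | |];
    intros; apply sumR_zero; intros; auto.
Qed.

Lemma sum3_telescope_y N H : (forall i k, H i 0%nat k = 0) -> (forall i k, H i N k = 0) ->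
  sum3 N (fun i j k => H i j k - H i (j - 1)%nat k) = 0.
Proof.
intros H0 HN; unfold sum3; apply sumR_zero; intros i _.
set (K b := sumR N (fun k => H (S i) b (S k))).
transitivity (sumR N (fun j => K (S j) - K j)).
- apply sumR_ext; intros j _; unfold K; rewrite <- sumR_sub; apply sumR_ext; intros.
  replace (S j - 1)%nat with j by lia; reflexivity.
- rewrite sumR_telescope; unfold K.
  rewrite !(sumR_zero N (fun k => H (S i) _ (S k))); [ring | |]; intros; auto.
Qed.

Lemma sum3_telescope_z N H : (forall i j, H i j 0%nat = 0) -> (forall i j, H i j N = 0) ->
  sum3 N (fun i j k => H i j k - H i j (k - 1)%nat) = 0.
Proof.
intros H0 HN; unfold sum3; apply sumR_zero; intros i _; apply sumR_zero; intros j _.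
transitivity (sumR N (fun k => H (S i) (S j) (S k) - H (S i) (S j) k)).
- apply sumR_ext; intros k _; replace (S k - 1)%nat with k by lia; reflexivity.
- rewrite (sumR_telescope N (fun k => H (S i) (S j) k)), H0, HN; ring.
Qed.

Lemma ext_in N u i j k : in_cells N i j k -> ext N u i j k = u i j k.
Proof. unfold in_cells, ext, clamp; intros H; do 3 f_equal; lia. Qed.

Lemma clamp_0 N : clamp N 0 = clamp N 1.
Proof. unfold clamp; lia. Qed.

Lemma clamp_S N : clamp N (S N) = clamp N N.
Proof. unfold clamp; lia. Qed.

Lemma Dx_0 N h u j k : Dx N h u 0%nat j k = 0.
Proof. unfold Dx, ext; rewrite clamp_0; unfold Rdiv; ring. Qed.
Lemma Dx_N N h u j k : Dx N h u N j k = 0.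
Proof. unfold Dx, ext; rewrite clamp_S; unfold Rdiv; ring. Qed.
Lemma Dy_0 N h u i k : Dy N h u i 0%nat k = 0.
Proof. unfold Dy, ext; rewrite clamp_0; unfold Rdiv; ring. Qed.
Lemma Dy_N N h u i k : Dy N h u i N k = 0.
Proof. unfold Dy, ext; rewrite clamp_S; unfold Rdiv; ring. Qed.
Lemma Dz_0 N h u i j : Dz N h u i j 0%nat = 0.
Proof. unfold Dz, ext; rewrite clamp_0; unfold Rdiv; ring. Qed.
Lemma Dz_N N h u i j : Dz N h u i j N = 0.
Proof. unfold Dz, ext; rewrite clamp_S; unfold Rdiv; ring. Qed.

Lemma sum3_dx_by_parts N h (F g : grid) :
  (forall j k, F 0%nat j k = 0) -> (forall j k, F N j k = 0) ->
  sum3 N (fun i j k => g i j k * dx h F i j k)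
  = - sum3 N (ax (fun i j k => F i j k * Dx N h g i j k)).
Proof.
intros F0 FN; apply Rplus_opp_r_uniq; rewrite <- sum3_add.
rewrite <- (sum3_telescope_x N (fun i j k => F i j k * (ext N g i j k + ext N g (S i) j k) / 2 / h))
  by (intros; rewrite ?F0, ?FN; unfold Rdiv; ring).
apply sum3_ext; intros i j k Hc; unfold dx, ax, Dx.
replace (S (i - 1)) with i by (unfold in_cells in Hc; lia).
(* Abstracting / h lets field use only 2 <> 0, so no hypothesis h <> 0 is needed. *)
rewrite (ext_in N g i j k Hc); unfold Rdiv; set (ih := / h); field.
Qed.

Lemma sum3_dy_by_parts N h (F g : grid) :
  (forall i k, F i 0%nat k = 0) -> (forall i k, F i N k = 0) ->
  sum3 N (fun i j k => g i j k * dy h F i j k)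
  = - sum3 N (ay (fun i j k => F i j k * Dy N h g i j k)).
Proof.
intros F0 FN; apply Rplus_opp_r_uniq; rewrite <- sum3_add.
rewrite <- (sum3_telescope_y N (fun i j k => F i j k * (ext N g i j k + ext N g i (S j) k) / 2 / h))
  by (intros; rewrite ?F0, ?FN; unfold Rdiv; ring).
apply sum3_ext; intros i j k Hc; unfold dy, ay, Dy.
replace (S (j - 1)) with j by (unfold in_cells in Hc; lia).
rewrite (ext_in N g i j k Hc); unfold Rdiv; set (ih := / h); field.
Qed.

Lemma sum3_dz_by_parts N h (F g : grid) :
  (forall i j, F i j 0%nat = 0) -> (forall i j, F i j N = 0) ->
  sum3 N (fun i j k => g i j k * dz h F i j k)
  = - sum3 N (az (fun i j k => F i j k * Dz N h g i j k)).
Proof.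
intros F0 FN; apply Rplus_opp_r_uniq; rewrite <- sum3_add.
rewrite <- (sum3_telescope_z N (fun i j k => F i j k * (ext N g i j k + ext N g i j (S k)) / 2 / h))
  by (intros; rewrite ?F0, ?FN; unfold Rdiv; ring).
apply sum3_ext; intros i j k Hc; unfold dz, az, Dz.
replace (S (k - 1)) with k by (unfold in_cells in Hc; lia).
rewrite (ext_in N g i j k Hc); unfold Rdiv; set (ih := / h); field.
Qed.

Lemma ip_one N h F : ip N h F one = h ^ 3 * sum3 N F.
Proof. unfold ip, one; f_equal; apply sum3_ext; intros; ring. Qed.

Lemma ip_divDgrad N h D u g :
  ip N h g (divDgrad N h D u) = - wgrad_ip N h D u g.
Proof.
unfold wgrad_ip, face_ip; rewrite !ip_one; unfold ip.
rewrite (sum3_ext N _ (fun i j k =>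
    g i j k * dx h (fun a b c => Ax N D a b c * Dx N h u a b c) i j k
  + g i j k * dy h (fun a b c => Ay N D a b c * Dy N h u a b c) i j k
  + g i j k * dz h (fun a b c => Az N D a b c * Dz N h u a b c) i j k))
  by (intros; unfold divDgrad; ring).
rewrite !sum3_add, sum3_dx_by_parts, sum3_dy_by_parts, sum3_dz_by_parts;
  try (intros; cbv beta; rewrite ?Dx_0, ?Dx_N, ?Dy_0, ?Dy_N, ?Dz_0, ?Dz_N; ring).
Qed.

Lemma Ax_one N i j k : Ax N one i j k = 1.
Proof. unfold Ax, ext, one; field. Qed.
Lemma Ay_one N i j k : Ay N one i j k = 1.
Proof. unfold Ay, ext, one; field. Qed.
Lemma Az_one N i j k : Az N one i j k = 1.
Proof. unfold Az, ext, one; field. Qed.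

Lemma Lap_divDgrad_one N h u i j k : Lap N h u i j k = divDgrad N h one u i j k.
Proof.
unfold Lap, divDgrad, dx, dy, dz.
rewrite !Ax_one, !Ay_one, !Az_one, !Rmult_1_l; reflexivity.
Qed.

Lemma wgrad_ip_one_sum_diff N h p q :
  wgrad_ip N h one (fun i j k => p i j k + q i j k) (fun i j k => p i j k - q i j k)
  = gradnorm2 N h p - gradnorm2 N h q.
Proof.
unfold wgrad_ip, gradnorm2, face_ip; rewrite !ip_one; sum3_combine; intros i j k _.
unfold ax, ay, az; rewrite !Ax_one, !Ay_one, !Az_one.
unfold Dx, Dy, Dz, ext; unfold Rdiv; ring.
Qed.

Lemma norm2sq_nonneg N h u : 0 <= h -> 0 <= norm2sq N h u.
Proof.
intros Hh; unfold norm2sq, ip; apply Rmult_le_pos; [apply pow_le; exact Hh|].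
apply sum3_nonneg; intros; apply Rle_0_sqr.
Qed.

Lemma ext_pos N D i j k : (1 <= N)%nat ->
  (forall a b c, in_cells N a b c -> 0 < D a b c) -> 0 < ext N D i j k.
Proof. intros HN HD; apply HD; unfold in_cells, clamp; lia. Qed.

Lemma wgrad_ip_self_nonneg N h D u : (1 <= N)%nat -> 0 <= h ->
  (forall i j k, in_cells N i j k -> 0 < D i j k) -> 0 <= wgrad_ip N h D u u.
Proof.
intros HN Hh HD.
pose proof (fun i j k => ext_pos N D i j k HN HD) as Hext.
assert (Hsq : forall A x, 0 < A -> 0 <= A * x * x) by (intros; nra).
assert (Hx : forall i j k, 0 <= Ax N D i j k * Dx N h u i j k * Dx N h u i j k).
{ intros; apply Hsq; unfold Ax; pose proof (Hext (S i) j k); pose proof (Hext i j k); lra. }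
assert (Hy : forall i j k, 0 <= Ay N D i j k * Dy N h u i j k * Dy N h u i j k).
{ intros; apply Hsq; unfold Ay; pose proof (Hext i (S j) k); pose proof (Hext i j k); lra. }
assert (Hz : forall i j k, 0 <= Az N D i j k * Dz N h u i j k * Dz N h u i j k).
{ intros; apply Hsq; unfold Az; pose proof (Hext i j (S k)); pose proof (Hext i j k); lra. }
unfold wgrad_ip, face_ip; rewrite !ip_one.
repeat apply Rplus_le_le_0_compat; apply Rmult_le_pos; try (apply pow_le; exact Hh);
  apply sum3_nonneg; intros i j k _; unfold ax, ay, az.
- pose proof (Hx i j k); pose proof (Hx (i - 1)%nat j k); lra.
- pose proof (Hy i j k); pose proof (Hy i (j - 1)%nat k); lra.
- pose proof (Hz i j k); pose proof (Hz i j (k - 1)%nat); lra.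
Qed.

Lemma ip_scal_l N h c f g :
  ip N h (fun i j k => c * f i j k) g = c * ip N h f g.
Proof. unfold ip; sum3_combine; intros; ring. Qed.

Lemma ip_cross_increment N h r0 r1 p0 p1 :
  2 * (ip N h r1 p1 - ip N h r0 p0)
  = ip N h (fun i j k => r1 i j k - r0 i j k) (fun i j k => p1 i j k + p0 i j k)
  + ip N h (fun i j k => r1 i j k + r0 i j k) (fun i j k => p1 i j k - p0 i j k).
Proof. unfold ip; sum3_combine; intros; ring. Qed.

Lemma ip_increment_divDgrad N h D dt (r0 r1 v : grid) : dt <> 0 ->
  (forall i j k, in_cells N i j k -> (r1 i j k - r0 i j k) / dt = divDgrad N h D v i j k) ->
  ip N h (fun i j k => r1 i j k - r0 i j k) v = - dt * wgrad_ip N h D v v.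
Proof.
intros Hdt Hstep.
replace (- dt * wgrad_ip N h D v v) with (dt * ip N h v (divDgrad N h D v))
  by (rewrite ip_divDgrad; ring).
unfold ip; sum3_combine; intros i j k Hc.
rewrite <- (Hstep i j k Hc); field; exact Hdt.
Qed.

Lemma crank_nicolson_energy N h mu alpha theta dt (s p0 p1 : grid) : dt <> 0 ->
  (forall i j k, in_cells N i j k ->
     theta * ((p1 i j k - p0 i j k) / dt)
     = mu / 2 * (Lap N h p1 i j k + Lap N h p0 i j k)
       - alpha / 2 * (p1 i j k + p0 i j k) + s i j k) ->
  theta / dt * norm2sq N h (fun i j k => p1 i j k - p0 i j k)
  = - (mu / 2) * (gradnorm2 N h p1 - gradnorm2 N h p0)
    - alpha / 2 * (norm2sq N h p1 - norm2sq N h p0)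
    + ip N h s (fun i j k => p1 i j k - p0 i j k).
Proof.
intros Hdt Hstep.
rewrite <- wgrad_ip_one_sum_diff, <- (Ropp_involutive (wgrad_ip _ _ one _ _)), <- ip_divDgrad.
unfold norm2sq, ip; sum3_combine; intros i j k Hc.
rewrite <- Lap_divDgrad_one.
transitivity (h ^ 3 * (theta * ((p1 i j k - p0 i j k) / dt)) * (p1 i j k - p0 i j k));
  [field; exact Hdt|].
rewrite (Hstep i j k Hc); unfold Lap, dx, dy, dz, Dx, Dy, Dz, ext; unfold Rdiv; ring.
Qed.

Lemma ip_vhalf N h gamma chi theta dt f1 f2 f3 rho0 rho1 phi0 phi1 w :
  ip N h w (vhalf gamma chi theta dt f1 f2 f3 rho0 rho1 phi0 phi1)
  = gamma * ip N h w (Shalf f1 f2 f3 rho0 rho1)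
    - chi / 2 * ip N h w (fun i j k => phi1 i j k + phi0 i j k)
    + chi ^ 2 * dt / (4 * theta) * ip N h w (fun i j k => rho1 i j k - rho0 i j k).
Proof. unfold ip; sum3_combine; intros; unfold vhalf; ring. Qed.

Lemma derivable_pt_lim_sub_cubic (F F' : R -> R) x r c0 c1 c2 c3 :
  derivable_pt_lim F x (F' x) ->
  derivable_pt_lim (fun t => F t - (c0 + c1 * (t - r) + c2 * (t - r) ^ 2 + c3 * (t - r) ^ 3)) x
    (F' x - (c1 + 2 * c2 * (x - r) + 3 * c3 * (x - r) ^ 2)).
Proof.
intros HF; apply derivable_pt_lim_minus; [exact HF|].
apply is_derive_Reals; auto_derive; [exact I | ring].
Qed.

Section TaylorInterval.

Variable I : R -> Prop.
Hypothesis I_interval : forall x y c, I x -> I y -> x <= c <= y -> I c.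

Section SignOfDerivative.

Variables g g' : R -> R.
Hypothesis g_deriv : forall x, I x -> derivable_pt_lim g x (g' x).

Lemma MVT_interval r t : I r -> I t -> r <> t ->
  exists c, I c /\ 0 < (c - r) * (t - r) /\ g t - g r = g' c * (t - r).
Proof.
intros Hr Ht Hrt; destruct (Rlt_dec r t) as [Hlt | Hge].
- destruct (MVT_cor2 g g' r t Hlt) as [c [Hmvt Hc]].
  + intros c Hc; apply g_deriv, (I_interval r t); auto.
  + exists c; repeat split; [apply (I_interval r t); auto; lra | nra | exact Hmvt].
- assert (Hlt : t < r) by lra.
  destruct (MVT_cor2 g g' t r Hlt) as [c [Hmvt Hc]].
  + intros c Hc; apply g_deriv, (I_interval t r); auto.
  + exists c; repeat split; [apply (I_interval t r); auto; lra | nra | lra].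
Qed.

Lemma sign_from_nonneg_deriv r : I r -> g r = 0 ->
  (forall x, I x -> 0 <= g' x) -> forall t, I t -> 0 <= (t - r) * g t.
Proof.
intros Hr Hgr Hg' t Ht; destruct (Req_dec r t) as [<- | Hrt]; [nra|].
destruct (MVT_interval r t Hr Ht Hrt) as [c [Hc [_ Hmvt]]].
specialize (Hg' c Hc); replace (g t) with (g' c * (t - r)) by lra.
replace ((t - r) * (g' c * (t - r))) with (g' c * (t - r) ^ 2) by ring.
apply Rmult_le_pos; [exact Hg' | apply pow2_ge_0].
Qed.

Lemma nonneg_from_signed_deriv r : I r -> g r = 0 ->
  (forall x, I x -> 0 <= (x - r) * g' x) -> forall t, I t -> 0 <= g t.
Proof.
intros Hr Hgr Hg' t Ht; destruct (Req_dec r t) as [<- | Hrt]; [lra|].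
destruct (MVT_interval r t Hr Ht Hrt) as [c [Hc [Hcr Hmvt]]].
specialize (Hg' c Hc).
assert (Hprod : 0 <= (c - r) ^ 2 * (g' c * (t - r))).
{ replace ((c - r) ^ 2 * (g' c * (t - r))) with (((c - r) * g' c) * ((c - r) * (t - r))) by ring.
  apply Rmult_le_pos; lra. }
assert (0 < (c - r) ^ 2).
{ apply pow2_gt_0; intro E; rewrite E in Hcr; lra. }
replace (g t) with (g' c * (t - r)) by lra.
apply (Rmult_le_reg_l ((c - r) ^ 2)); lra.
Qed.

End SignOfDerivative.

Variables f f1 f2 f3 f4 : R -> R.
Hypothesis f_deriv1 : forall x, I x -> derivable_pt_lim f x (f1 x).
Hypothesis f_deriv2 : forall x, I x -> derivable_pt_lim f1 x (f2 x).
Hypothesis f_deriv3 : forall x, I x -> derivable_pt_lim f2 x (f3 x).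
Hypothesis f_deriv4 : forall x, I x -> derivable_pt_lim f3 x (f4 x).
Hypothesis f4_pos : forall x, I x -> 0 < f4 x.

Lemma increment_le_cubic_taylor r0 r1 : I r0 -> I r1 ->
  f r1 - f r0 <= (f1 r1 - 1 / 2 * f2 r1 * (r1 - r0) + 1 / 6 * f3 r1 * (r1 - r0) ^ 2) * (r1 - r0).
Proof.
intros Hr0 Hr1.
(* With R_k := f^(k) minus its Taylor polynomial of degree 3 - k at r1, R_k' = R_(k+1);
   since f'''' > 0, R_3 and R_1 have the sign of t - r1 while R_2 and R_0 are >= 0. *)
pose proof (fun F F' (HF : forall x, I x -> derivable_pt_lim F x (F' x)) c0 c1 c2 c3 x Hx =>
  derivable_pt_lim_sub_cubic F F' x r1 c0 c1 c2 c3 (HF x Hx)) as D.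
pose proof (sign_from_nonneg_deriv _ _ (D f3 f4 f_deriv4 (f3 r1) 0 0 0) r1 Hr1
  ltac:(cbv beta; ring) ltac:(intros x Hx; specialize (f4_pos x Hx); cbv beta in *; lra)) as S3.
pose proof (nonneg_from_signed_deriv _ _ (D f2 f3 f_deriv3 (f2 r1) (f3 r1) 0 0) r1 Hr1
  ltac:(cbv beta; ring) ltac:(intros x Hx; specialize (S3 x Hx); cbv beta in *; lra)) as S2.
pose proof (sign_from_nonneg_deriv _ _ (D f1 f2 f_deriv2 (f1 r1) (f2 r1) (f3 r1 / 2) 0) r1 Hr1
  ltac:(cbv beta; ring) ltac:(intros x Hx; specialize (S2 x Hx); cbv beta in *; lra)) as S1.
pose proof (nonneg_from_signed_deriv _ _ (D f f1 f_deriv1 (f r1) (f1 r1) (f2 r1 / 2) (f3 r1 / 6)) r1 Hr1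
  ltac:(cbv beta; ring) ltac:(intros x Hx; specialize (S1 x Hx); cbv beta in *; lra) r0 Hr0) as S0.
lra.
Qed.


Lemma ip_energy_increment_le N h (r0 r1 : grid) : 0 <= h ->
  (forall i j k, in_cells N i j k -> I (r0 i j k)) ->
  (forall i j k, in_cells N i j k -> I (r1 i j k)) ->
  ip N h (fun i j k => f (r1 i j k)) one - ip N h (fun i j k => f (r0 i j k)) one
  <= ip N h (fun i j k => r1 i j k - r0 i j k) (Shalf f1 f2 f3 r0 r1).
Proof.
intros Hh Hr0 Hr1; rewrite !ip_one, <- Rmult_minus_distr_l, <- sum3_sub; unfold ip.
apply Rmult_le_compat_l; [apply pow_le; exact Hh|].
apply sum3_le; intros i j k Hc; unfold Shalf.
pose proof (increment_le_cubic_taylor (r0 i j k) (r1 i j k) (Hr0 i j k Hc) (Hr1 i j k Hc)); lra.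
Qed.

End TaylorInterval.

Lemma inI_interval lo hi x y c : inI lo hi x -> inI lo hi y -> x <= c <= y -> inI lo hi c.
Proof. unfold inI; destruct lo, hi; simpl; intuition lra. Qed.

Theorem mainTheorem4
  (lo hi : Rbar) (f f1 f2 f3 f4 : R -> R)
  (Hint : Rbar_lt lo hi)
  (Hd1 : forall x, inI lo hi x -> derivable_pt_lim f x (f1 x))
  (Hd2 : forall x, inI lo hi x -> derivable_pt_lim f1 x (f2 x))
  (Hd3 : forall x, inI lo hi x -> derivable_pt_lim f2 x (f3 x))
  (Hd4 : forall x, inI lo hi x -> derivable_pt_lim f3 x (f4 x))
  (Hc4 : forall x, inI lo hi x -> continuity_pt f4 x)
  (Hf2 : forall x, inI lo hi x -> 0 < f2 x)
  (Hf4 : forall x, inI lo hi x -> 0 < f4 x)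
  (a b : R) (N : nat) (Hab : a < b) (HN : (1 <= N)%nat)
  (gamma mu alpha chi theta dt : R)
  (Hgamma : 0 < gamma) (Hmu : 0 < mu) (Halpha : 0 < alpha) (Hchi : 0 < chi)
  (Htheta : 0 < theta) (Hdt : 0 < dt)
  (rho_nm1 rho_n phi_n rho_np1 phi_np1 : grid)
  (Hrn : forall i j k, in_cells N i j k -> inI lo hi (rho_n i j k))
  (Hrnp1 : forall i j k, in_cells N i j k -> inI lo hi (rho_np1 i j k))
  (Hrhat : forall i j k, in_cells N i j k -> inI lo hi (rhohat dt rho_nm1 rho_n i j k))
  (Hscheme_rho : forall i j k, in_cells N i j k ->
     (rho_np1 i j k - rho_n i j k) / dt
     = divDgrad N ((b - a) / INR N)
         (fun p q r => 1 / f2 (rhohat dt rho_nm1 rho_n p q r))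
         (vhalf gamma chi theta dt f1 f2 f3 rho_n rho_np1 phi_n phi_np1) i j k)
  (Hscheme_phi : forall i j k, in_cells N i j k ->
     theta * ((phi_np1 i j k - phi_n i j k) / dt)
     = mu / 2 * (Lap N ((b - a) / INR N) phi_np1 i j k + Lap N ((b - a) / INR N) phi_n i j k)
       - alpha / 2 * (phi_np1 i j k + phi_n i j k)
       + chi / 2 * (rho_np1 i j k + rho_n i j k)) :
  let h := (b - a) / INR N in
  let v := vhalf gamma chi theta dt f1 f2 f3 rho_n rho_np1 phi_n phi_np1 in
  let rhs :=
    - dt * wgrad_ip N h (fun p q r => 1 / f2 (rhohat dt rho_nm1 rho_n p q r)) v v
    - theta / dt * norm2sq N h (fun p q r => phi_np1 p q r - phi_n p q r)
    - chi ^ 2 * dt / (4 * theta) * norm2sq N h (fun p q r => rho_np1 p q r - rho_n p q r) in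
  Fh N h gamma chi mu alpha f rho_np1 phi_np1 - Fh N h gamma chi mu alpha f rho_n phi_n <= rhs
  /\ rhs <= 0.
Proof.
intros h v rhs.
assert (Hh : 0 < h) by (apply Rdiv_lt_0_compat; [lra | apply lt_0_INR; lia]).
assert (Hdt0 : dt <> 0) by lra.
set (D := fun p q r => 1 / f2 (rhohat dt rho_nm1 rho_n p q r)) in *.
assert (HD : forall i j k, in_cells N i j k -> 0 < D i j k)
  by (intros; apply Rdiv_lt_0_compat; [lra | apply Hf2, Hrhat; assumption]).
pose proof (wgrad_ip_self_nonneg N h D v HN (Rlt_le _ _ Hh) HD) as HW.
pose proof (norm2sq_nonneg N h (fun p q r => phi_np1 p q r - phi_n p q r) (Rlt_le _ _ Hh)) as HP.
pose proof (norm2sq_nonneg N h (fun p q r => rho_np1 p q r - rho_n p q r) (Rlt_le _ _ Hh)) as HQ.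
pose proof (ip_energy_increment_le (inI lo hi) (inI_interval lo hi) f f1 f2 f3 f4
  Hd1 Hd2 Hd3 Hd4 Hf4 N h rho_n rho_np1 (Rlt_le _ _ Hh) Hrn Hrnp1) as Hf.
pose proof (ip_increment_divDgrad N h D dt rho_n rho_np1 v Hdt0 Hscheme_rho) as Hrho.
pose proof (crank_nicolson_energy N h mu alpha theta dt
  (fun p q r => chi / 2 * (rho_np1 p q r + rho_n p q r)) phi_n phi_np1 Hdt0 Hscheme_phi) as Hphi.
pose proof (ip_vhalf N h gamma chi theta dt f1 f2 f3 rho_n rho_np1 phi_n phi_np1
  (fun p q r => rho_np1 p q r - rho_n p q r)) as Hv; fold v in Hv.
rewrite ip_scal_l in Hphi.
pose proof (ip_cross_increment N h rho_n rho_np1 phi_n phi_np1) as Hcross.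
assert (Hrhs : rhs <= 0).
{ unfold rhs.
  assert (0 <= theta / dt) by (apply Rlt_le, Rdiv_lt_0_compat; lra).
  assert (0 <= chi ^ 2 * dt / (4 * theta))
    by (apply Rlt_le, Rdiv_lt_0_compat; [apply Rmult_lt_0_compat; [apply pow_lt|]|]; lra).
  nra. }
split; [|exact Hrhs].
apply (Rmult_le_compat_l gamma) in Hf; [|lra].
apply (f_equal (Rmult (chi / 2))) in Hcross.
unfold rhs, Fh, norm2sq in *; lra.
Qed.
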